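(* Let $G_1$ and $G_2$ be directed graphs without self-loops on the common vertex set $[n]$ that are distribution equivalent, i.e. $\mathcal{P}(G_1)=\mathcal{P}(G_2)$. Then the condensation graphs of $G_1$ and $G_2$ are identical.
   Context: For a directed graph $G$ on $[n]$ without self-loops, let $B_G\in\{0,1\}^{n\times n}$ be its adjacency matrix with $[B_G]_{ij}=1$ iff there is an edge $j\to i$. A linear structural causal model consistent with $G$ is $\mathbf{x}=W\mathbf{x}+\mathbf{e}$ where $W\in\mathbb{R}^{n\times n}$ has $\{(i,j):W_{ij}\neq 0\}=\{(i,j):[B_G]_{ij}=1\}$, $I-W$ is invertible, and the noise vector $\mathbf{e}$ has jointly independent components of which at most one is Gaussian. The distribution set $\mathcal{P}(G)$ is the set of all distributions of $\mathbf{x}=(I-W)^{-1}\mathbf{e}$ arising from all such $W$ and noise distributions. Strongly connected components (SCCs) are the equivalence classes of the relation ''there are directed paths $u\to v$ and $v\to u$''. The condensation graph of $G$ is the directed graph whose vertices are the SCCs of $G$, with an edge from SCC $S$ to SCC $S'\neq S$ iff $G$ has an edge from some vertex of $S$ to some vertex of $S'$. *)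

From HB Require Import structures.
From mathcomp Require Import all_boot all_order all_algebra.
From mathcomp Require Import all_classical all_reals all_analysis.
Set Implicit Arguments.
Unset Strict Implicit.
Unset Printing Implicit Defensive.
Import Order.TTheory GRing.Theory Num.Theory.
Local Open Scope classical_set_scope.
Local Open Scope ring_scope.

Definition digraph (n : nat) := 'I_n -> 'I_n -> bool.

Definition loopless n (G : digraph n) : Prop := forall i, ~~ G i i.

(* Adjacency matrix convention: [B_G]_{ij} = 1 iff edge j -> i. *)
Definition adj_mx n (G : digraph n) : 'M[nat]_n :=
  \matrix_(i, j) nat_of_bool (G j i).

Definition consistent (R : realType) n (G : digraph n) (W : 'M[R]_n) : Prop :=
  forall i j, (W i j != 0) = (adj_mx G i j == 1%N).

Definition jointly_independent d (Omega : measurableType d) (R : realType)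
  (P : probability Omega R) n (e : 'I_n -> Omega -> R) : Prop :=
  forall A : 'I_n -> set R, (forall i, measurable (A i)) ->
    P (\bigcap_(i in [set: 'I_n]) (e i @^-1` A i)) =
    (\prod_(i < n) P (e i @^-1` A i))%E.

Definition is_gaussian d (Omega : measurableType d) (R : realType)
  (P : probability Omega R) (X : Omega -> R) : Prop :=
  exists (m s : R), s != 0 /\
    forall A : set R, measurable A -> P (X @^-1` A) = normal_prob m s A.

(* Distributions on R^n are represented as set functions on n.-tuple R
   (with its product sigma-algebra); only values on measurable sets matter. *)
Definition distr_Rn (R : realType) (n : nat) := set (n.-tuple R) -> \bar R.

Definition lsem_distrs (R : realType) n (G : digraph n) : set (distr_Rn R n) :=
  fun mu =>
  exists (W : 'M[R]_n),
    consistent G W /\ (1%:M - W) \in unitmx /\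
  exists (d : measure_display) (Omega : measurableType d)
         (P : probability Omega R) (e : 'I_n -> Omega -> R),
    (forall i, measurable_fun [set: Omega] (e i)) /\
    jointly_independent P e /\
    (forall i j, is_gaussian P (e i) -> is_gaussian P (e j) -> i = j) /\
    let x : Omega -> n.-tuple R :=
      fun w => [tuple \sum_(j < n) invmx (1%:M - W) i j * e j w | i < n] in
    forall A : set (n.-tuple R), measurable A -> mu A = P (x @^-1` A).

Definition scc n (G : digraph n) (u : 'I_n) : {set 'I_n} :=
  [set v | connect G u v && connect G v u].

Definition sccs n (G : digraph n) : {set {set 'I_n}} :=
  [set scc G u | u : 'I_n].

Definition cond_edge n (G : digraph n) (S T : {set 'I_n}) : bool :=
  [&& S \in sccs G, T \in sccs G, S != T &
      [exists u in S, exists v in T, G u v]].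

Definition same_condensation n (G1 G2 : digraph n) : Prop :=
  sccs G1 = sccs G2 /\ forall S T, cond_edge G1 S T = cond_edge G2 S T.
Arguments lsem_distrs R {n} G.

From HB Require Import structures.
From mathcomp Require Import all_boot all_order all_algebra.
From mathcomp Require Import all_classical all_reals all_analysis.
From mathcomp Require Import measurable_realfun zify.
Set Implicit Arguments.
Unset Strict Implicit.
Unset Printing Implicit Defensive.
Import Order.TTheory GRing.Theory Num.Theory.
Local Open Scope ring_scope.

(* Take a model of G1 whose noise e is uniform on the vertices of the cube
   {0,1}^n.  If its law is also a model of G2, the G2-noise is f = M e with
   M = (I - W2)(I - W1)^-1 invertible, and its coordinates are independent.
   Independence gives 2^-n = P(f = M s) = prod_j P(f_j = (M s)_j), while each
   factor is at most 1/2 because row j of M is nonzero; so every level set of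
   every row of M covers half of the cube, which forces each row to have a
   single nonzero entry.  Thus M is a scaled permutation t, and
   I - W2 = M (I - W1) says that the parents of i in G2, together with i, are
   those of t i in G1, together with t i.  The orbits of t stay inside strongly
   connected components, so both graphs have the same reachability relation
   and the same edges between components. *)

Lemma fconnect_sub_connect (T : finType) (f : T -> T) (e : rel T) :
  (forall x, connect e x (f x)) -> subrel (fconnect f) (connect e).
Proof. by move=> fe; apply: connect_sub => x _ /eqP <-. Qed.

Section SCC.
Variables (n : nat) (G : digraph n).

Lemma scc_eq u v : connect G u v -> connect G v u -> scc G u = scc G v.
Proof.
move=> uv vu; apply/setP => w; rewrite !inE.
apply/andP/andP => -[uw wu]; split.
- exact: connect_trans vu uw.
- exact: connect_trans wu uv.
- exact: connect_trans uv uw.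
- exact: connect_trans wu vu.
Qed.

Lemma sccs_mem_scc S u : S \in sccs G -> u \in S -> S = scc G u.
Proof. by move=> /imsetP[v _ ->]; rewrite inE => /andP[vu uv]; exact: scc_eq. Qed.

End SCC.

Lemma eq_sccs n (G1 G2 : digraph n) :
  connect G1 =2 connect G2 -> sccs G1 = sccs G2.
Proof.
move=> c12; have scc12 u : scc G1 u = scc G2 u by apply/setP => v; rewrite !inE !c12.
by apply: eq_imset => u; rewrite scc12.
Qed.

Definition closed_parents n (G : digraph n) (i : 'I_n) : {set 'I_n} :=
  [set j | (j == i) || G j i].

Lemma cond_edge_sub n (G1 G2 : digraph n) :
  connect G1 =2 connect G2 ->
  (forall u v, G1 u v -> exists2 w, w \in scc G2 v & u \in closed_parents G2 w) ->
  forall S T, cond_edge G1 S T -> cond_edge G2 S T.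
Proof.
move=> c12 edge12 S T; rewrite /cond_edge (eq_sccs c12).
case/and4P=> S2 T2 neST /existsP[u /andP[uS /existsP[v /andP[vT uv]]]].
have [w wv uw_par] := edge12 u v uv; rewrite -(sccs_mem_scc T2 vT) in wv.
have uw : u != w.
  by apply: contraNneq neST => uw; rewrite (sccs_mem_scc S2 uS) (sccs_mem_scc T2 wv) uw.
have G2uw : G2 u w by move: uw_par; rewrite inE (negbTE uw).
rewrite S2 T2 neST; apply/existsP; exists u; rewrite uS.
by apply/existsP; exists w; rewrite wv.
Qed.

Section PermutedParents.
Variables (n : nat) (G1 G2 : digraph n) (t : 'I_n -> 'I_n).
Hypotheses (t_inj : injective t)
  (parentsE : forall i, closed_parents G2 i = closed_parents G1 (t i)).

Lemma connect_closed_parent j i : j \in closed_parents G1 i -> connect G1 j i.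
Proof. by rewrite inE => /orP[/eqP ->|/connect1]. Qed.

Lemma fconnect_connect_perm : subrel (fconnect t) (connect G1).
Proof.
apply: fconnect_sub_connect => i; apply: connect_closed_parent.
by rewrite -parentsE inE eqxx.
Qed.

Lemma mem_scc_perm i : t i \in scc G1 i.
Proof.
rewrite inE !fconnect_connect_perm ?fconnect1 //.
by rewrite fconnect_sym ?fconnect1.
Qed.

Lemma edge_perm_scc u v : G2 u v -> exists2 w, w \in scc G1 v & u \in closed_parents G1 w.
Proof.
move=> uv; exists (t v); first exact: mem_scc_perm.
by rewrite -parentsE inE uv orbT.
Qed.

Lemma sub_connect_perm : subrel (connect G2) (connect G1).
Proof.
apply: connect_sub => u v /edge_perm_scc[w]; rewrite inE => /andP[_ wv] uw.
exact: connect_trans (connect_closed_parent uw) wv.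
Qed.

End PermutedParents.

Lemma same_condensation_perm n (G1 G2 : digraph n) (t : 'I_n -> 'I_n) :
  injective t -> (forall i, closed_parents G2 i = closed_parents G1 (t i)) ->
  same_condensation G1 G2.
Proof.
move=> t_inj parentsE.
have parentsE' j : closed_parents G1 j = closed_parents G2 (finv t j).
  by rewrite parentsE f_finv.
have tinv_inj : injective (finv t) by exact: finv_inj.
have c12 : connect G1 =2 connect G2.
  move=> u v; apply/idP/idP.
  - exact: sub_connect_perm tinv_inj parentsE' u v.
  - exact: sub_connect_perm t_inj parentsE u v.
split; first exact: eq_sccs.
move=> S T; apply/idP/idP; apply: cond_edge_sub.
- exact: c12.
- exact: edge_perm_scc tinv_inj parentsE'.
- by move=> u v; rewrite c12.
- exact: edge_perm_scc t_inj parentsE.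
Qed.

Section Monomial.
Variables (R : fieldType) (n : nat).
Implicit Types M L : 'M[R]_n.

Definition single_nz_rows M := forall i j k, M i j != 0 -> M i k != 0 -> j = k.

Lemma unitmx_row_neq0 M i : M \in unitmx -> exists j, M i j != 0.
Proof.
case: (pickP (fun j => M i j != 0)) => [j Mij _|Mi0]; first by exists j.
rewrite unitmxE (expand_det_row _ i) big1 ?unitr0 // => j _.
by move/negbFE/eqP: (Mi0 j) => ->; rewrite mul0r.
Qed.

Lemma monomial_support M : M \in unitmx -> single_nz_rows M ->
  exists2 t : 'I_n -> 'I_n, injective t & forall i j, (M i j != 0) = (j == t i).
Proof.
move=> uM single; pose t i := odflt i [pick j | M i j != 0].
have Mt i : M i (t i) != 0.
  rewrite /t; case: pickP => [j //|Mi0].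
  by have [j] := unitmx_row_neq0 i uM; rewrite Mi0.
have suppM i j : (M i j != 0) = (j == t i).
  by apply/idP/eqP => [Mij|->]; [exact: single Mij (Mt i)|exact: Mt].
(* Every column of M has a nonzero entry, so t is onto, hence injective. *)
exists t => //; apply/injectiveP/card_uniqP; rewrite size_map -cardE.
apply: eq_card => k; rewrite inE; symmetry.
have [i] := unitmx_row_neq0 k (etrans (unitmx_tr M) uM); rewrite mxE suppM => /eqP ->.
by rewrite map_f ?mem_enum.
Qed.

Lemma mulmx_monomial_neq0 M L t : (forall i j, (M i j != 0) = (j == t i)) ->
  forall i j, ((M *m L) i j != 0) = (L (t i) j != 0).
Proof.
move=> suppM i j; rewrite mxE (bigD1 (t i)) //= big1 ?addr0.
  by rewrite mulf_eq0 negb_or suppM eqxx.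
by move=> k; rewrite -suppM => /negbNE/eqP ->; rewrite mul0r.
Qed.

End Monomial.

Lemma consistent_support (R : realType) n (G : digraph n) (W : 'M[R]_n) :
  loopless G -> consistent G W ->
  forall i j, ((1%:M - W) i j != 0) = (j \in closed_parents G i).
Proof.
move=> loopG consW i j; have WE k l : (W k l != 0) = G l k.
  by rewrite consW mxE; case: (G l k).
rewrite inE !mxE; have [->|_] := eqVneq j i.
  by move: (loopG i); rewrite -WE negbK => /eqP ->; rewrite subr0 oner_eq0.
by rewrite sub0r oppr_eq0 WE.
Qed.

Lemma same_condensation_monomial (R : realType) n (G1 G2 : digraph n)
    (W1 W2 M : 'M[R]_n) :
  loopless G1 -> loopless G2 -> consistent G1 W1 -> consistent G2 W2 ->
  M \in unitmx -> 1%:M - W2 = M *m (1%:M - W1) -> single_nz_rows M ->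
  same_condensation G1 G2.
Proof.
move=> loop1 loop2 cons1 cons2 uM W12 single.
have [t t_inj suppM] := monomial_support uM single.
apply: (same_condensation_perm t_inj) => i; apply/setP => j.
by rewrite -(consistent_support loop2 cons2) -(consistent_support loop1 cons1) W12
  (mulmx_monomial_neq0 _ suppM).
Qed.

Lemma prodr_ile1_eq1 (R : numDomainType) (I : finType) (F : I -> R) :
  (forall i, 0 <= F i <= 1) -> \prod_i F i = 1 -> forall i, F i = 1.
Proof.
move=> F01 prodF1 i; apply/eqP; rewrite eq_le (andP (F01 i)).2 -{1}prodF1 (bigD1 i) //=.
by apply: ler_piMr; [exact: (andP (F01 i)).1|exact: prodr_ile1].
Qed.

Lemma card_cube n : #|{ffun 'I_n -> bool}| = (2 ^ n)%N.
Proof. by rewrite card_ffun card_bool card_ord. Qed.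

Section CubeLevels.
Variables (R : realFieldType) (n : nat).
Local Notation cube := {ffun 'I_n -> bool}.
Implicit Types (M : 'M[R]_n) (s : cube).

Definition row_val M j s : R := \sum_k M j k * (s k)%:R.

Definition level M j (c : R) : {set cube} := [set s | row_val M j s == c].

Definition flip (k : 'I_n) s : cube := [ffun i => (i == k) (+) s i].

Definition vertex (A : {set 'I_n}) : cube := [ffun i => i \in A].

Lemma flipK k : involutive (flip k).
Proof. by move=> s; apply/ffunP => i; rewrite !ffunE addbA addbb. Qed.

Lemma row_val_flip M j k s : M j k != 0 -> row_val M j (flip k s) != row_val M j s.
Proof.
move=> Mjk; rewrite /row_val (bigD1 k) //= [X in _ != X](bigD1 k) //=.
under eq_bigr => i ik do rewrite ffunE (negbTE ik) /=.
rewrite (can2_eq (addrK _) (subrK _)) addrK ffunE eqxx.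
by case: (s k); rewrite /= ?mulr0 ?mulr1 // eq_sym.
Qed.

Lemma row_val_vertex M j A : row_val M j (vertex A) = \sum_(k in A) M j k.
Proof.
rewrite /row_val [RHS]big_mkcond; apply: eq_bigr => k _.
by rewrite ffunE; case: (k \in A); rewrite ?mulr1 ?mulr0.
Qed.

(* Flipping coordinate k moves row_val M j by +-M j k, so flip k maps a
   level set injectively into its complement. *)
Lemma level_card_half_le M j k c : M j k != 0 -> (#|level M j c| * 2 <= #|cube|)%N.
Proof.
move=> Mjk; have flipC : flip k @: level M j c \subset ~: level M j c.
  apply/fintype.subsetP => x /imsetP[s]; rewrite !inE => /eqP sc ->.
  by rewrite -sc row_val_flip.
move: (subset_leq_card flipC); rewrite card_imset; last exact: can_inj (flipK k).
by rewrite -(cardsC (level M j c)) muln2 -addnn leq_add2l.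
Qed.

Lemma card_levels3_le M j c1 c2 c3 : c1 != c2 -> c1 != c3 -> c2 != c3 ->
  (#|level M j c1| + #|level M j c2| + #|level M j c3| <= #|cube|)%N.
Proof.
move=> c12 c13 c23; rewrite -(cardsC (level M j c1)) -addnA leq_add2l.
have /eqP <- : (#|level M j c2 :|: level M j c3| == #|level M j c2| + #|level M j c3|)%N.
  rewrite (leq_card_setU _ _).2; apply/pred0P => s /=; rewrite !inE.
  by apply: contraNF c23 => /andP[/eqP <- /eqP <-].
apply/subset_leq_card/fintype.subsetP => s; rewrite !inE.
by case/orP=> /eqP ->; rewrite eq_sym.
Qed.

Lemma row_val_three_values M j k l : k != l -> M j k != 0 -> M j l != 0 ->
  exists s1 s2 s3, [/\ row_val M j s1 != row_val M j s2,
    row_val M j s1 != row_val M j s3 & row_val M j s2 != row_val M j s3].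
Proof.
move=> kl Mjk Mjl; exists (vertex finset.set0), (vertex [set k]).
have [lk|lk] := eqVneq (M j l) (M j k); last first.
  exists (vertex [set l]); rewrite !row_val_vertex big_set0 !big_set1.
  by split; rewrite eq_sym.
exists (vertex [set k; l]).
rewrite !row_val_vertex big_set0 big_setU1 /= ?inE // !big_set1 lk.
have a2 : M j k + M j k != 0 by rewrite -mulr2n mulrn_eq0 negb_or Mjk.
have a21 : M j k + M j k != M j k by rewrite -subr_eq0 addrK.
by split; rewrite eq_sym.
Qed.

Lemma half_levels_single_nz M j :
    (forall s0, #|level M j (row_val M j s0)| * 2 = #|cube|)%N ->
  forall k l, M j k != 0 -> M j l != 0 -> k = l.
Proof.
move=> half k l Mjk Mjl; apply/eqP; apply: contraT => kl.
have [s1 [s2 [s3 [d12 d13 d23]]]] := row_val_three_values kl Mjk Mjl.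
have : (0 < #|level M j (row_val M j s1)|)%N by apply/card_gt0P; exists s1; rewrite inE.
by move: (card_levels3_le M j d12 d13 d23) (half s1) (half s2) (half s3); lia.
Qed.

Lemma row_val_inj M s s0 : M \in unitmx ->
  (forall j, row_val M j s = row_val M j s0) -> s = s0.
Proof.
move=> uM sameM; pose col (t : cube) : 'cV[R]_n := \col_k (t k)%:R.
have colM t j : (M *m col t) j 0 = row_val M j t.
  by rewrite mxE; apply: eq_bigr => k _; rewrite mxE.
have : M *m col s = M *m col s0 by apply/colP => j; rewrite !colM.
move/(congr1 (mulmx (invmx M))); rewrite !mulKmx // => /colP col_s.
apply/ffunP => k; move: (col_s k); rewrite !mxE => /eqP; rewrite eqr_nat.
by case: (s k) (s0 k) => -[].
Qed.

Lemma level_card_half M s0 : M \in unitmx ->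
    (#|cube|%:R : R)^-1 = \prod_j (#|level M j (row_val M j s0)|%:R / #|cube|%:R) ->
  forall j, (#|level M j (row_val M j s0)| * 2 = #|cube|)%N.
Proof.
move=> uM indep j; set L := fun j => #|level M j (row_val M j s0)|.
have cube_gt0 : 0 < #|cube|%:R :> R by rewrite ltr0n card_cube expn_gt0.
have L01 i : 0 <= ((L i * 2)%:R / #|cube|%:R : R) <= 1.
  have [k Mik] := unitmx_row_neq0 i uM.
  by rewrite divr_ge0 //= ler_pdivrMr // mul1r ler_nat (level_card_half_le _ Mik).
have prodL : \prod_i ((L i * 2)%:R / #|cube|%:R) = 1 :> R.
  under eq_bigr do rewrite natrM mulrAC.
  by rewrite big_split /= -indep prodr_const card_ord card_cube natrX mulVf // -natrX
    -card_cube gt_eqF.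
move: (prodr_ile1_eq1 L01 prodL j) => /(congr1 (fun x => x * #|cube|%:R)).
by rewrite mul1r divfK ?gt_eqF // => /eqP; rewrite eqr_nat => /eqP.
Qed.
End CubeLevels.

Lemma card_ffun_box (I : finType) (p : I -> pred bool) :
  #|[set s : {ffun I -> bool} | [forall i, p i (s i)]]| = (\prod_i #|p i|)%N.
Proof.
transitivity #|family p|.
  by apply: eq_card => s; rewrite inE; apply/forallP/familyP.
by rewrite card_family foldrE big_image.
Qed.

Section CubeProbability.
Variables (R : realType) (n : nat).
Local Notation cube := {ffun 'I_n -> bool}.
Implicit Types s : cube.

Definition cube_pt (s : cube) : n.-tuple R := [tuple (s i)%:R | i < n].

Definition cube0 : cube := [ffun=> false].

Definition cube_mass : {measure set (n.-tuple R) -> \bar R} :=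
  msum (fun k => \d_(cube_pt (nth cube0 (enum cube) k))) #|cube|.

(* The fallback [point] of mnormalize is never used: the total mass is #|cube|. *)
Definition cube_prob : probability (n.-tuple R) R := mnormalize cube_mass point.

Lemma cube_massE A : cube_mass A = (#|[set s | cube_pt s \in A]|%:R)%:E.
Proof.
rewrite /cube_mass /= /msum.
under eq_bigr do rewrite /= diracE.
rewrite sumEFin; congr EFin.
rewrite -(big_mkord xpredT (fun k => ((cube_pt (nth cube0 (enum cube) k) \in A)%:R : R))).
rewrite cardE -(big_nth cube0 xpredT (fun s => ((cube_pt s \in A)%:R : R))) big_enum /=.
rewrite -sumr_const [RHS]big_mkcond /=.
by apply: eq_bigr => s _; rewrite inE; case: (_ \in A).
Qed.

Lemma card_cube_gt0 : (0 < #|cube|)%N.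
Proof. by rewrite card_cube expn_gt0. Qed.

Lemma cube_probE A : cube_prob A = (#|[set s | cube_pt s \in A]|%:R / #|cube|%:R)%:E.
Proof.
have massT : cube_mass setT = (#|cube|%:R)%:E.
  by rewrite cube_massE; congr (_%:R%:E); apply: eq_card => s; rewrite inE in_setT.
have cube_neq0 : (#|cube|%:R : R) != 0 by rewrite pnatr_eq0 -lt0n card_cube_gt0.
rewrite /cube_prob /=; unfold mnormalize; rewrite massT.
case: ifP => [|_]; first by rewrite eqe (negbTE cube_neq0).
by rewrite cube_massE -EFinM.
Qed.

Lemma tnth_cube_pt s i : tnth (cube_pt s) i = (s i)%:R.
Proof. exact: tnth_mktuple. Qed.

Lemma cube_prob_box (B : set (n.-tuple R)) (q : 'I_n -> pred bool) :
    (forall s, (cube_pt s \in B) = [forall i, q i (s i)]) ->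
  cube_prob B = (\prod_i (#|q i|%:R / 2))%:E.
Proof.
move=> Bq; rewrite cube_probE; congr EFin.
have -> : [set s | cube_pt s \in B] = [set s : cube | [forall i, q i (s i)]].
  by apply/setP => s; rewrite !inE Bq.
rewrite card_ffun_box card_cube natr_prod prodf_div.
by rewrite prodr_const card_ord natrX.
Qed.

Lemma cube_prob_indep : jointly_independent cube_prob (fun i x => tnth x i).
Proof.
move=> A _; pose q i (b : bool) := (b%:R : R) \in A i.
rewrite (@cube_prob_box _ q); last first.
  move=> s; apply/idP/forallP; rewrite in_setE /=.
    by move=> sA i; rewrite /q -tnth_cube_pt in_setE; exact: sA.
  by move=> sA i _; rewrite /preimage /= tnth_cube_pt -in_setE; exact: sA.
rewrite (eq_bigr (fun i => (#|q i|%:R / 2)%:E)) ?prodEFin // => i _.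
rewrite (@cube_prob_box _ (fun j => if j == i then q i else xpredT)); last first.
  move=> s; apply/idP/forallP => [|/(_ i)].
    rewrite in_setE /preimage /= tnth_cube_pt => sA j.
    by have [->|//] := eqVneq j i; rewrite /= in_setE.
  by rewrite eqxx /= !in_setE /preimage /= tnth_cube_pt.
congr EFin; rewrite (bigD1 i) //= eqxx big1 ?mulr1 // => j /negbTE ->.
by rewrite [#|_|](_ : _ = 2%N) ?divff // -card_bool; apply: eq_card.
Qed.

Lemma cube_coord_not_gaussian i : ~ is_gaussian cube_prob (fun x => tnth x i).
Proof.
move=> [m [sigma [_ /(_ [set 0]%classic (measurable_set1 0))]]].
have -> : normal_prob m sigma [set 0]%classic = 0%E.
  apply: (null_content_dominatesP _ _).1 (normal_prob_dominates m sigma) _ _ _.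
  - exact: measurable_set1.
  - exact: lebesgue_measure_set1.
rewrite cube_probE => -[] /eqP; apply/negP.
rewrite mulf_neq0 ?invr_eq0 ?pnatr_eq0 -?lt0n ?card_cube_gt0 //.
apply/card_gt0P; exists cube0.
by rewrite inE in_setE /preimage /= tnth_cube_pt ffunE.
Qed.
End CubeProbability.

Section MatrixTuple.
Variables (R : realType) (n : nat).
Implicit Types (M : 'M[R]_n) (x : n.-tuple R).

Definition mxtuple M x : n.-tuple R := [tuple \sum_j M i j * tnth x j | i < n].

Lemma tnth_mxtuple M x i : tnth (mxtuple M x) i = \sum_j M i j * tnth x j.
Proof. exact: tnth_mktuple. Qed.

Lemma mxtupleE M (g : 'I_n -> R) :
  mxtuple M [tuple g j | j < n] = [tuple \sum_j M i j * g j | i < n].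
Proof.
apply: eq_from_tnth => i; rewrite tnth_mxtuple tnth_mktuple.
by apply: eq_bigr => j _; rewrite tnth_mktuple.
Qed.

Lemma mxtupleM M1 M2 x : mxtuple M1 (mxtuple M2 x) = mxtuple (M1 *m M2) x.
Proof.
apply: eq_from_tnth => i; rewrite !tnth_mxtuple.
under eq_bigr do rewrite tnth_mxtuple mulr_sumr.
rewrite exchange_big; apply: eq_bigr => k _; rewrite mxE mulr_suml.
by apply: eq_bigr => j _; rewrite mulrA.
Qed.

Lemma mxtuple1 x : mxtuple 1%:M x = x.
Proof.
apply: eq_from_tnth => i; rewrite tnth_mxtuple (bigD1 i) //= big1 ?mxE ?eqxx ?mul1r ?addr0 //.
by move=> j ji; rewrite mxE eq_sym (negbTE ji) mul0r.
Qed.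

Lemma measurable_mxtuple M : measurable_fun setT (mxtuple M).
Proof.
apply/measurable_fun_tnthP => i.
rewrite (_ : _ \o _ = fun x => \sum_j M i j * tnth x j); last first.
  by apply/funext => x; rewrite /= tnth_mxtuple.
apply: measurable_sum => j; apply: measurableT_comp (measurable_tnth j).
exact: mulrl_measurable.
Qed.

Lemma tnth_mxtuple_cube M s j : tnth (mxtuple M (cube_pt R s)) j = row_val M j s.
Proof. by rewrite tnth_mxtuple; apply: eq_bigr => k _; rewrite tnth_cube_pt. Qed.

End MatrixTuple.

Section IndependentCubeImage.
Variables (R : realType) (n : nat).
Local Notation cube := {ffun 'I_n -> bool}.
Local Open Scope classical_set_scope.

Lemma indep_cube_image_single_nz d (Omega : measurableType d) (P : probability Omega R)
    (f : 'I_n -> Omega -> R) (M : 'M[R]_n) :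
  M \in unitmx -> jointly_independent P f ->
  (forall B, measurable B ->
     P ((fun w => [tuple f i w | i < n]) @^-1` B) = cube_prob R n (mxtuple M @^-1` B)) ->
  single_nz_rows M.
Proof.
move=> uM indepf lawf j; apply: half_levels_single_nz => s0; apply: (level_card_half uM).
pose c i := row_val M i s0; pose ftuple w := [tuple f i w | i < n].
have tnth_ftuple i : (@tnth n R)^~ i \o ftuple = f i.
  by apply/funext => w; rewrite /= tnth_mktuple.
have mcoord i (a : R) : measurable ((@tnth n R)^~ i @^-1` [set a]).
  by rewrite -[_ @^-1` _]setTI; exact: measurable_tnth.
have levelP i : P (f i @^-1` [set c i]) = (#|level M i (c i)|%:R / #|cube|%:R)%:E.
  rewrite -tnth_ftuple comp_preimage lawf ?mcoord // cube_probE; congr (_%:R / _)%:E.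
  apply: eq_card => s; rewrite !inE.
  by apply/idP/eqP; rewrite in_setE /preimage /= tnth_mxtuple_cube.
have boxP : P (\bigcap_(i in setT) f i @^-1` [set c i]) = (#|cube|%:R^-1)%:E.
  have -> : \bigcap_(i in setT) f i @^-1` [set c i] =
      ftuple @^-1` \bigcap_(i in setT) ((@tnth n R)^~ i @^-1` [set c i]).
    by apply/seteqP; split=> w /= fw i _; move: (fw i I); rewrite /= tnth_mktuple.
  rewrite lawf; last first.
    by apply: fin_bigcap_measurable => [|i _]; [exact: finite_finset|exact: mcoord].
  rewrite cube_probE (_ : [set s : cube | _]%SET = [set s0]%SET) ?cards1 ?mul1r //.
  apply/setP => s; rewrite !inE; apply/idP/eqP => [|->]; rewrite in_setE /=.
    by move=> sc; apply: row_val_inj uM _ => i; move: (sc i I); rewrite /= tnth_mxtuple_cube.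
  by move=> i _; rewrite /= tnth_mxtuple_cube.
move: (indepf (fun i => [set c i]) (fun i => measurable_set1 (c i))).
by rewrite boxP (eq_bigr _ (fun i _ => levelP i)) prodEFin => -[].
Qed.

End IndependentCubeImage.

Lemma unitmx_1_sub_small (R : realFieldType) n (W : 'M[R]_n) (eps : R) :
  (forall i j, `|W i j| <= eps) -> n%:R * eps < 1 -> (1%:M - W) \in unitmx.
Proof.
move=> Wle small; rewrite unitmxE unitfE; apply/negP => /det0P[v v0].
rewrite mulmxBr mulmx1 => /eqP; rewrite subr_eq0 => /eqP vW.
pose S := \sum_i `|v 0 i|.
have S_ge0 : 0 <= S by apply: sumr_ge0 => i _.
have vj j : `|v 0 j| <= eps * S.
  rewrite vW mxE (le_trans (ler_norm_sum _ _ _)) // mulr_sumr ler_sum // => i _.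
  by rewrite normrM mulrC ler_wpM2r.
have S_le : S <= n%:R * eps * S.
  apply: le_trans (ler_sum _ (fun j _ => vj j)) _.
  by rewrite sumr_const card_ord -mulrA mulr_natl.
have S0 : S = 0.
  apply/le_anti; rewrite S_ge0 andbT -(pmulr_rle0 _ (_ : 0 < 1 - n%:R * eps)).
    by rewrite mulrBl mul1r subr_le0.
  by rewrite subr_gt0.
move/negP: v0; apply; apply/eqP/rowP => i; rewrite mxE.
by apply/normr0_eq0; apply: (psumr_eq0P _ S0) => // k _.
Qed.

Lemma consistent_unit_exists (R : realType) n (G : digraph n) :
  exists2 W : 'M[R]_n, consistent G W & (1%:M - W) \in unitmx.
Proof.
pose eps : R := n.+1%:R^-1.
have eps_gt0 : 0 < eps by rewrite invr_gt0 ltr0n.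
exists (\matrix_(i, j) if G j i then eps else 0).
  by move=> i j; rewrite !mxE; case: (G j i); rewrite ?(gt_eqF eps_gt0) ?eqxx.
apply: (@unitmx_1_sub_small _ _ _ eps) => [i j|].
  by rewrite mxE; case: (G j i); rewrite ?normr0 ?(gtr0_norm eps_gt0) ?(ltW eps_gt0).
by rewrite /eps ltr_pdivrMr ?ltr0n // mul1r ltr_nat.
Qed.

Section LinearSEM.
Variables (R : realType) (n : nat).
Local Open Scope classical_set_scope.

Lemma lsem_cube_law (G : digraph n) (W : 'M[R]_n) :
  consistent G W -> (1%:M - W) \in unitmx ->
  lsem_distrs R G (fun B => cube_prob R n (mxtuple (invmx (1%:M - W)) @^-1` B)).
Proof.
move=> consW uW; exists W; split => //; split => //.
exists _, _, (cube_prob R n), (fun i x => tnth x i); split; first exact: measurable_tnth.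
split; first exact: cube_prob_indep.
by split => // i j /cube_coord_not_gaussian.
Qed.

Lemma lsem_noise_law (G : digraph n) (mu : distr_Rn R n) : lsem_distrs R G mu ->
  exists2 W : 'M[R]_n, consistent G W & (1%:M - W) \in unitmx /\
  exists d (Omega : measurableType d) (P : probability Omega R) (e : 'I_n -> Omega -> R),
    jointly_independent P e /\
    forall B, measurable B ->
      P ((fun w => [tuple e i w | i < n]) @^-1` B) = mu (mxtuple (1%:M - W) @^-1` B).
Proof.
case=> W [consW [uW [disp [Om [P [e [_ [indep [_ law]]]]]]]]].
exists W => //; split => //; exists disp, Om, P, e; split => // B mB.
rewrite law; last by rewrite -[_ @^-1` _]setTI; exact: measurable_mxtuple.
apply: congr1; apply/funext => w.
by rewrite /preimage /= -mxtupleE mxtupleM mulmxV // mxtuple1.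
Qed.
End LinearSEM.

Theorem corollary1 (R : realType) (n : nat) (G1 G2 : digraph n) :
  loopless G1 -> loopless G2 ->
  lsem_distrs R G1 = lsem_distrs R G2 ->
  same_condensation G1 G2.
Proof.
move=> loop1 loop2 P12.
have [W1 cons1 u1] := consistent_unit_exists R G1.
have /lsem_noise_law[W2 cons2 [u2 [disp [T [P [e [indep lawe]]]]]]] :
    lsem_distrs R G2 (fun B => cube_prob R n (mxtuple (invmx (1%:M - W1)) @^-1` B)%classic).
  by rewrite -P12; exact: lsem_cube_law.
pose M := (1%:M - W2) *m invmx (1%:M - W1).
have uM : M \in unitmx by rewrite unitmx_mul u2 unitmx_inv u1.
apply: (same_condensation_monomial loop1 loop2 cons1 cons2 uM).
  by rewrite -mulmxA mulVmx // mulmx1.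
apply: (indep_cube_image_single_nz uM indep) => B mB.
rewrite lawe //; apply: congr1; apply/funext => x.
by rewrite /preimage /= mxtupleM.
Qed.
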